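(* Let $n\ge0$ and $\boldsymbol\mu\in\mathcal{P}(\Phi)$, and suppose $k=\|\boldsymbol\mu\|+\ell(\boldsymbol\mu^e)\le n$. Then the centralizer $\mathcal A_{\boldsymbol\mu^{\uparrow n}}$ of $J_{\boldsymbol\mu^{\uparrow n}}$ in $G_n$ is $$\mathcal A_{\boldsymbol\mu^{\uparrow n}}=\left\{\begin{bmatrix}A&B\\C&D\end{bmatrix}\ \middle|\ A\in\mathcal A_{\boldsymbol\mu^{\uparrow k}},\ D\in G_{n-k},\ J_{\boldsymbol\mu^{\uparrow k}}B=B,\ CJ_{\boldsymbol\mu^{\uparrow k}}=C\right\},$$ where the block decomposition is of size $(k\,|\,n-k)$ and $\mathcal A_{\boldsymbol\mu^{\uparrow k}}$ is the centralizer of $J_{\boldsymbol\mu^{\uparrow k}}$ in $G_k$.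
   Context: $q$ is a prime power, $G_n=GL_n(\mathbb F_q)$. $\Phi$ is the set of monic irreducible polynomials in $\mathbb F_q[t]$ other than $t$, $d(f)$ the degree of $f$; $\mathcal{P}(\Phi)$ is the set of finitely supported maps $\boldsymbol\lambda$ from $\Phi$ to partitions, $\|\boldsymbol\lambda\|=\sum_f d(f)|\boldsymbol\lambda(f)|$, $\boldsymbol\lambda^e=\boldsymbol\lambda(t-1)$, $\ell$ = number of nonzero parts. For $f=t^d-\sum_{i=1}^d a_it^{i-1}\in\Phi$, $J(f)$ is the $d\times d$ companion matrix with $1$'s on the superdiagonal, last row $(a_1,\dots,a_d)$ and zeros elsewhere; $J_m(f)$ is the $dm\times dm$ block upper triangular matrix with $m$ diagonal blocks $J(f)$, blocks $I_d$ on the block superdiagonal, and zeros elsewhere. For $\boldsymbol\lambda\in\mathcal{P}(\Phi)$, $J_{\boldsymbol\lambda}$ is the block diagonal matrix with blocks $J_{\boldsymbol\lambda_i(f)}(f)$ over all $f$ and $i$, arranged with the blocks for $f\ne t-1$ first and then the blocks for $f=t-1$ in nonincreasing order of part size. For $\boldsymbol\mu\in\mathcal{P}(\Phi)$ with $r=\ell(\boldsymbol\mu^e)$ and $n\ge\|\boldsymbol\mu\|+r$, define $\boldsymbol\mu^{\uparrow n}\in\mathcal{P}(\Phi)$ by $\boldsymbol\mu^{\uparrow n}(f)=\boldsymbol\mu(f)$ for $f\ne t-1$ and $\boldsymbol\mu^{\uparrow n}(t-1)=(\boldsymbol\mu^e_1+1,\dots,\boldsymbol\mu^e_r+1,1,\dots,1)$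 with $n-r-\|\boldsymbol\mu\|$ trailing ones; then $J_{\boldsymbol\mu^{\uparrow n}}\in G_n$. *)

From HB Require Import structures.
From mathcomp Require Import all_boot all_order all_algebra all_field.
Set Implicit Arguments. Unset Strict Implicit. Unset Printing Implicit Defensive.
Import GRing.Theory.
Local Open Scope ring_scope.

Section Defs.
Variable F : finFieldType.

(* An element of P(Phi): a finite list of pairs (f, lambda(f)) with distinct keys;
   f not in the list means lambda(f) is the empty partition. *)
Definition PPhi := seq ({poly F} * seq nat).

Definition is_partition (s : seq nat) : bool :=
  sorted geq s && all (fun x => 0 < x)%N s.

Definition inPhi (f : {poly F}) : Prop :=
  f \is monic /\ irreducible_poly f /\ f != 'X.

Definition PPhi_valid (mu : PPhi) : Prop :=
  uniq (unzip1 mu) /\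
  forall p, p \in mu -> inPhi p.1 /\ is_partition p.2.

Definition tm1 : {poly F} := 'X - 1.

Definition PPhi_at (mu : PPhi) (f : {poly F}) : seq nat :=
  head [::] [seq p.2 | p <- mu & p.1 == f].

Definition PPhi_e (mu : PPhi) : seq nat := PPhi_at mu tm1.

Definition PPhi_norm (mu : PPhi) : nat :=
  (\sum_(p <- mu) (size p.1).-1 * sumn p.2)%N.

Definition PPhi_up (n : nat) (mu : PPhi) : PPhi :=
  (tm1, map S (PPhi_e mu) ++ nseq (n - size (PPhi_e mu) - PPhi_norm mu) 1%N)
  :: [seq p <- mu | p.1 != tm1].

(* a square block: its size and its entries indexed by naturals *)
Definition block := (nat * (nat -> nat -> F))%type.

(* companion matrix J(f), with f = t^d - sum a_i t^(i-1), so a_(j+1) = - f_j *)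
Definition compJ (f : {poly F}) (i j : nat) : F :=
  let d := (size f).-1 in
  (if i == d.-1 then - f`_j else 0) + (if j == i.+1 then 1 else 0).

Definition Jm (f : {poly F}) (m : nat) : block :=
  let d := (size f).-1 in
  ((d * m)%N, fun i j =>
     let bi := (i %/ d)%N in let bj := (j %/ d)%N in
     if bi == bj then compJ f (i %% d) (j %% d)
     else if bj == bi.+1 then (if (i %% d == j %% d)%N then 1 else 0)
     else 0).

Fixpoint bdiag (bs : seq block) (i j : nat) : F :=
  match bs with
  | [::] => 0
  | (s, B) :: bs' =>
      if (i < s)%N && (j < s)%N then B i j
      else if (s <= i)%N && (s <= j)%N then bdiag bs' (i - s) (j - s)
      else 0
  end.

(* the blocks of J_lambda: first f <> t-1 (in list order), then the blocks for
   t-1 in nonincreasing order of part size (the partition is nonincreasing) *)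
Definition Jblocks (lam : PPhi) : seq block :=
  flatten [seq [seq Jm p.1 m | m <- p.2] | p <- lam & p.1 != tm1]
  ++ [seq Jm tm1 m | m <- PPhi_e lam].

Definition Jmat (n : nat) (lam : PPhi) : 'M[F]_n :=
  \matrix_(i < n, j < n) bdiag (Jblocks lam) i j.

Definition centralizerGL (n : nat) (J : 'M[F]_n) : pred 'M[F]_n :=
  [pred X | (X \in unitmx) && (X *m J == J *m X)].

End Defs.

From HB Require Import structures.
From mathcomp Require Import all_boot all_order all_algebra all_field.
From mathcomp Require Import zify.
Set Implicit Arguments. Unset Strict Implicit. Unset Printing Implicit Defensive.
Import GRing.Theory.
Local Open Scope ring_scope.

(* The trailing blocks of J_{mu^{up n}} are 1 x 1 blocks J_1(t-1) = (1),
   so J_{mu^{up n}} = diag(J, 1) with J = J_{mu^{up k}}.  A block matrix [A B; C D]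
   commutes with diag(J, 1) iff A commutes with J, J B = B and C J = C.  Invertibility
   is the real point: if every J-fixed row annihilates every J-fixed column, then
   C A^-1 B = 0 and C' B = 0 = C B' (primes for the blocks of the inverse), so
   [A B; C D] is invertible iff A and D are.  This orthogonality holds block by block:
   a block J_m(f) with f <> t-1 irreducible has no fixed column since f(1) <> 0, and a
   unipotent block J_m(t-1) has fixed columns supported on its first coordinate and
   fixed rows on its last one, which differ because every (t-1)-part of mu^{up k}
   is at least 2. *)

Lemma sum_nat_blocks (V : nmodType) m d (G : nat -> V) :
  \sum_(0 <= c < m * d) G c = \sum_(0 <= q < m) \sum_(0 <= r < d) G (q * d + r)%N.
Proof.
rewrite big_nat_mul; apply: eq_bigr => q _.
rewrite -{1}[(q * d)%N]add0n big_addn mulSn addnK.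
by apply: eq_bigr => r _; rewrite addnC.
Qed.

Lemma sum_nat_pick (R : pzSemiRingType) m t (G : nat -> R) :
  \sum_(0 <= c < m) (c == t)%:R * G c = if (t < m)%N then G t else 0.
Proof.
rewrite (eq_bigr (fun c => if c == t then G c else 0)); last first.
  by move=> c _; case: eqP; rewrite ?mul1r ?mul0r.
by rewrite -big_mkcond big_nat1_eq.
Qed.

Lemma horner1_monic (R : nzRingType) (f : {poly R}) : f \is monic ->
  f.[1] = \sum_(0 <= c < (size f).-1) f`_c + 1.
Proof.
move=> fmon; set d := (size f).-1.
have fd : f`_d = 1 by rewrite -(monicP fmon) lead_coefE.
rewrite horner_coef; have -> : size f = d.+1 by rewrite prednK // size_poly_gt0 monic_neq0.
rewrite big_ord_recr /= fd expr1n mulr1 big_mkord.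
by congr (_ + _); apply: eq_bigr => c _; rewrite expr1n mulr1.
Qed.

Section FixedOrthogonal.
Variable R : comUnitRingType.

Definition fixed_orthogonal k (J : 'M[R]_k) : Prop :=
  forall p p' (P : 'M_(k, p)) (Q : 'M_(p', k)),
    J *m P = P -> Q *m J = Q -> Q *m P = 0.

Lemma fixed_orthogonal0 (J : 'M[R]_0) : fixed_orthogonal J.
Proof. by move=> p p' P Q _ _; rewrite [P]flatmx0 mulmx0. Qed.

Lemma fixed_orthogonal_block k1 k2 (J1 : 'M[R]_k1) (J2 : 'M[R]_k2) :
  fixed_orthogonal J1 -> fixed_orthogonal J2 ->
  fixed_orthogonal (block_mx J1 0 0 J2).
Proof.
move=> fo1 fo2 p p' P Q; rewrite -[P]vsubmxK -[Q]hsubmxK.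
rewrite mul_block_col mul_row_block !mul0mx !mulmx0 !addr0 !add0r.
move=> /eq_col_mx[fixP1 fixP2] /eq_row_mx[fixQ1 fixQ2].
by rewrite mul_row_col (fo1 _ _ _ _ fixP1 fixQ1) (fo2 _ _ _ _ fixP2 fixQ2) addr0.
Qed.

Lemma invmx_comm n (A J : 'M[R]_n) : A *m J = J *m A -> invmx A *m J = J *m invmx A.
Proof.
move=> AJ; have [unitA|] := boolP (A \in unitmx); last by rewrite /invmx => /negbTE->.
by rewrite -[LHS](mulmxK unitA) -(mulmxA (invmx A)) -AJ (mulKmx unitA).
Qed.

Section BlockDiag1.
Variables (k m : nat) (J : 'M[R]_k).
Implicit Types (A : 'M[R]_k) (B : 'M[R]_(k, m)) (C : 'M[R]_(m, k)) (D : 'M[R]_m).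
Let J1 : 'M[R]_(k + m) := block_mx J 0 0 1%:M.

Lemma commute_block_diag1 A B C D :
  (block_mx A B C D *m J1 == J1 *m block_mx A B C D) =
  [&& A *m J == J *m A, J *m B == B & C *m J == C].
Proof.
rewrite /J1 !mulmx_block !mulmx0 !mul0mx !mulmx1 !mul1mx !addr0 !add0r.
by apply/eqP/and3P => [/eq_block_mx[-> <- -> _]|[/eqP-> /eqP-> /eqP->]].
Qed.

Hypothesis foJ : fixed_orthogonal J.

Lemma unitmx_block_diag1 A B C D :
  A *m J = J *m A -> J *m B = B -> C *m J = C ->
  (block_mx A B C D \in unitmx) = (A \in unitmx) && (D \in unitmx).
Proof.
move=> AJ JB CJ; apply/idP/andP => [unitY|[unitA unitD]].
  set Z := invmx (block_mx A B C D).
  have /eqP : Z *m J1 = J1 *m Z.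
    by apply/invmx_comm/eqP; rewrite commute_block_diag1 AJ JB CJ !eqxx.
  rewrite -[Z]submxK commute_block_diag1 => /and3P[_ /eqP JB' /eqP C'J].
  have := mulmxV unitY; rewrite -/Z -[Z]submxK mulmx_block scalar_mx_block.
  case/eq_block_mx => AA' _ _ DD'.
  have C'B : dlsubmx Z *m B = 0 by apply: foJ.
  have CB' : C *m ursubmx Z = 0 by apply: foJ.
  split; last by case: (mulmx1_unit (_ : D *m drsubmx Z = 1%:M)); rewrite // -DD' CB' add0r.
  (* A A' = 1 - B C', and (1 - B C') (1 + B C') = 1 because C' B = 0. *)
  have AA'E : A *m ulsubmx Z = 1%:M - B *m dlsubmx Z by rewrite -AA' addrK.
  apply: (proj1 (mulmx1_unit (B := ulsubmx Z *m (1%:M + B *m dlsubmx Z)) _)).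
  rewrite mulmxA AA'E mulmxDr mulmx1 mulmxBl mul1mx -!mulmxA (mulmxA (dlsubmx Z)).
  by rewrite C'B mul0mx mulmx0 subr0 subrK.
have fixA'B : J *m (invmx A *m B) = invmx A *m B.
  by rewrite mulmxA -invmx_comm // -mulmxA JB.
have CA'B : C *m (invmx A *m B) = 0 by apply: foJ.
have -> : block_mx A B C D = block_mx A 0 C D *m block_mx 1%:M (invmx A *m B) 0 1%:M.
  by rewrite mulmx_block !mulmx0 !mul0mx !mulmx1 !addr0 mulmxA (mulmxV unitA) mul1mx CA'B add0r.
rewrite unitmx_mul !unitmxE det_lblock det_ublock !det1 mulr1 unitrM.
by rewrite -!unitmxE unitA unitD unitr1.
Qed.

Lemma centralizer_block_diag1 A B C D :
  (block_mx A B C D \in unitmx) && (block_mx A B C D *m J1 == J1 *m block_mx A B C D) =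
  [&& (A \in unitmx) && (A *m J == J *m A), D \in unitmx, J *m B == B & C *m J == C].
Proof.
rewrite commute_block_diag1.
have [/eqP AJ|] := boolP (A *m J == J *m A); last by rewrite !andbF.
have [/eqP JB|] := boolP (J *m B == B); last by rewrite !andbF.
have [/eqP CJ|] := boolP (C *m J == C); last by rewrite !andbF.
by rewrite unitmx_block_diag1 // !andbT.
Qed.

End BlockDiag1.
End FixedOrthogonal.

Section Blocks.
Variable F : finFieldType.
Local Notation tm1 := (tm1 F).

Lemma size_tm1 : size tm1 = 2%N.
Proof. by rewrite /tm1 -polyC1 size_XsubC. Qed.

Lemma Jm_tm1_size m : (Jm tm1 m).1 = m.
Proof. by rewrite /= size_tm1 mul1n. Qed.

Lemma Jm_tm1E m i j : (Jm tm1 m).2 i j = (j == i)%:R + (j == i.+1)%:R.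
Proof.
rewrite /= size_tm1 !divn1 !modn1 /compJ size_tm1 /tm1 coefB coefX coefC /=.
rewrite sub0r opprK addr0 [i == j]eq_sym.
case: (eqVneq j i) => [->|_]; first by rewrite ltn_eqF ?addr0.
by rewrite add0r; case: (j == i.+1).
Qed.

Definition bdiag_mx m (bs : seq (block F)) : 'M[F]_m := \matrix_(i, j) bdiag bs i j.

Local Notation bsize bs := (sumn (map fst bs)).
Implicit Types bs : seq (block F).

Lemma bdiag_out bs i j : ((bsize bs <= i) || (bsize bs <= j))%N -> bdiag bs i j = 0.
Proof.
elim: bs i j => [|[s B] bs IH] i j //= out.
by rewrite ifF; [case: ifP => // _; apply: IH|]; lia.
Qed.

Lemma bdiag_cat bs1 bs2 i j :
  bdiag (bs1 ++ bs2) i j =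
  if ((i < bsize bs1) && (j < bsize bs1))%N then bdiag bs1 i j
  else if ((bsize bs1 <= i) && (bsize bs1 <= j))%N
       then bdiag bs2 (i - bsize bs1) (j - bsize bs1) else 0.
Proof.
elim: bs1 i j => [|[s B] bs1 IH] i j /=; first by rewrite !subn0.
rewrite IH !subnDA; do ![case: ifP => ? //=]; try lia.
all: by rewrite bdiag_out //; lia.
Qed.

Lemma bdiag_mx_cat m1 m2 bs1 bs2 : bsize bs1 = m1 ->
  bdiag_mx (m1 + m2) (bs1 ++ bs2) = block_mx (bdiag_mx m1 bs1) 0 0 (bdiag_mx m2 bs2).
Proof.
move=> <-; apply/matrixP => i j; rewrite mxE bdiag_cat -(splitK i) -(splitK j).
case: (split i) => i'; case: (split j) => j'; have := ltn_ord i'; have := ltn_ord j'.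
- by rewrite block_mxEul mxE /= => -> ->.
- by rewrite block_mxEur mxE /=; do ![case: ifP => ? //=]; lia.
- by rewrite block_mxEdl mxE /=; do ![case: ifP => ? //=]; lia.
- by rewrite block_mxEdr mxE /= !addKn; do ![case: ifP => ? //=]; lia.
Qed.

Lemma bdiag_mx_ones m : bdiag_mx m (nseq m (Jm tm1 1)) = 1%:M.
Proof.
suff bdiag_ones t i j : bdiag (nseq t (Jm tm1 1)) i j = ((i == j) && (i < t)%N)%:R.
  by apply/matrixP => i j; rewrite !mxE bdiag_ones ltn_ord andbT.
have := Jm_tm1E 1; have := Jm_tm1_size 1; case: (Jm tm1 1) => s B /= -> JE.
elim: t i j => [|t IH] i j /=; first by rewrite andbF.
rewrite IH JE; case: i j => [|i] [|j] //=; first by rewrite addr0.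
by rewrite !subn1 /= eqSS.
Qed.

Lemma fixed_orthogonal_bdiag (T : eqType) (g : T -> block F) (s : seq T) :
  {in s, forall x, fixed_orthogonal (bdiag_mx (g x).1 [:: g x])} ->
  fixed_orthogonal (bdiag_mx (bsize (map g s)) (map g s)).
Proof.
elim: s => [|x s IH] foG /=; first exact: fixed_orthogonal0.
rewrite -cat1s bdiag_mx_cat /= ?addn0 //.
apply: fixed_orthogonal_block; first by apply: foG; rewrite mem_head.
by apply: IH => y sy; apply: foG; rewrite inE sy orbT.
Qed.

Definition fixed_vec (b : block F) (w : nat -> F) : Prop :=
  forall i, (i < b.1)%N -> \sum_(0 <= c < b.1) b.2 i c * w c = w i.

Definition fixed_covec (b : block F) (u : nat -> F) : Prop :=
  forall j, (j < b.1)%N -> \sum_(0 <= c < b.1) u c * b.2 c j = u j.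

Lemma fixed_orthogonal_bdiag1 (b : block F) :
  (forall w u, fixed_vec b w -> fixed_covec b u ->
     forall a, (a < b.1)%N -> u a * w a = 0) ->
  fixed_orthogonal (bdiag_mx b.1 [:: b]).
Proof.
case: b => s B /= orthoB p p' P Q fixP fixQ; apply/matrixP => a e; rewrite !mxE.
pose w c := oapp (P^~ e) 0 (insub c); pose u c := oapp (Q a) 0 (insub c).
have wE (i : 'I_s) : w i = P i e by rewrite /w valK.
have uE (i : 'I_s) : u i = Q a i by rewrite /u valK.
have entryE (i j : 'I_s) : bdiag_mx s [:: (s, B)] i j = B i j by rewrite mxE /= !ltn_ord.
rewrite big1 // => i _; rewrite -wE -uE orthoB //= => [i' lti'|j' ltj'].
- have := congr1 (fun M : 'M_(s, p) => M (Ordinal lti') e) fixP; rewrite !mxE -wE => <-.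
  by rewrite big_mkord; apply: eq_bigr => c _; rewrite entryE wE.
- have := congr1 (fun M : 'M_(p', s) => M a (Ordinal ltj')) fixQ; rewrite !mxE -uE => <-.
  by rewrite big_mkord; apply: eq_bigr => c _; rewrite entryE uE.
Qed.

Lemma Jm_tm1_fixed_vec m w :
  fixed_vec (Jm tm1 m) w -> forall i, (i.+1 < m)%N -> w i.+1 = 0.
Proof.
rewrite /fixed_vec Jm_tm1_size => fixw i im; have := fixw i (ltnW im).
under eq_bigr do rewrite Jm_tm1E mulrDl.
by rewrite big_split /= !sum_nat_pick im ltnW // -[RHS]addr0 => /addrI.
Qed.

Lemma Jm_tm1_fixed_covec m u :
  fixed_covec (Jm tm1 m) u -> forall j, (j.+1 < m)%N -> u j = 0.
Proof.
rewrite /fixed_covec Jm_tm1_size => fixu j jm; have := fixu j.+1 jm.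
under eq_bigr do rewrite Jm_tm1E eqSS mulrDr !(mulrC (u _)) (eq_sym j.+1) (eq_sym j).
by rewrite big_split /= !sum_nat_pick jm ltnW // -[RHS]addr0 => /addrI.
Qed.

Lemma fixed_orthogonal_Jm_tm1 m :
  (1 < m)%N -> fixed_orthogonal (bdiag_mx (Jm tm1 m).1 [:: Jm tm1 m]).
Proof.
move=> m_gt1; apply: fixed_orthogonal_bdiag1 => w u fixw fixu.
rewrite Jm_tm1_size => -[_|a am]; first by rewrite (Jm_tm1_fixed_covec fixu) ?mul0r.
by rewrite (Jm_tm1_fixed_vec fixw) ?mulr0.
Qed.

Lemma compJ_fixed_eq0 (f : {poly F}) (v : nat -> F) : f \is monic -> f.[1] != 0 ->
  (forall r, (r < (size f).-1)%N -> \sum_(0 <= c < (size f).-1) compJ f r c * v c = v r) ->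
  forall r, (r < (size f).-1)%N -> v r = 0.
Proof.
move=> fmon f1 fixv; set d := (size f).-1 in fixv *.
have shift r : (r.+1 < d)%N -> v r.+1 = v r.
  move=> rd; have rdF : (r == d.-1) = false by apply/negbTE; lia.
  rewrite -[RHS]fixv ?(ltnW rd) // /compJ -/d.
  by under eq_bigr do rewrite rdF add0r -mulrb; rewrite sum_nat_pick rd.
have const r : (r < d)%N -> v r = v 0.
  by elim: r => [|r IH] rd //; rewrite shift // IH // ltnW.
move=> r rd; rewrite const //.
have /fixv : (d.-1 < d)%N by lia.
rewrite /compJ -/d eqxx; under eq_bigr do rewrite -mulrb mulrDl.
rewrite big_split /= sum_nat_pick prednK ?ltnn ?addr0; last by lia.
under eq_big_nat => c cd do rewrite mulNr const //.
rewrite sumrN -mulr_suml const; last by lia.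
move/eqP; rewrite eq_sym -subr_eq0 opprK -{1}[v 0]mul1r -mulrDl addrC -horner1_monic //.
by rewrite mulf_eq0 (negbTE f1) => /eqP.
Qed.

Section JordanBlock.
Variables (f : {poly F}) (m : nat).
Local Notation d := (size f).-1.
Hypothesis d_gt0 : (0 < d)%N.

Lemma Jm_entry i q r : (r < d)%N ->
  (Jm f m).2 i (q * d + r)%N =
  (q == i %/ d)%N%:R * compJ f (i %% d)%N r + (q == (i %/ d).+1)%N%:R * (i %% d == r)%N%:R.
Proof.
move=> rd; rewrite /= divnMDl // modnMDl (divn_small rd) (modn_small rd) addn0 [_ == q]eq_sym.
case: eqP => [->|_]; first by rewrite ltn_eqF // mulr1n mulr0n mul1r mul0r addr0.
by rewrite mulr0n mul0r add0r; do 2!case: eqP; rewrite ?mulr1n ?mulr0n ?mulr1 ?mulr0.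
Qed.

Lemma Jm_row_sum w i : (i < d * m)%N ->
  \sum_(0 <= c < d * m) (Jm f m).2 i c * w c =
  \sum_(0 <= r < d) compJ f (i %% d)%N r * w (i %/ d * d + r)%N
  + (if ((i %/ d).+1 < m)%N then w (i + d)%N else 0).
Proof.
move=> im; have qm : (i %/ d < m)%N by rewrite ltn_divLR // mulnC.
rewrite mulnC sum_nat_blocks.
under eq_bigr => q _.
  under eq_big_nat => r /andP[_ rd] do
    rewrite Jm_entry // mulrDl -!mulrA (eq_sym (i %% d)%N).
  rewrite big_split -!mulr_sumr /= sum_nat_pick ltn_mod d_gt0.
  over.
rewrite big_split /= !sum_nat_pick qm.
by case: ifP => //; rewrite mulSn -addnA -divn_eq addnC.
Qed.

Hypotheses (fmon : f \is monic) (f1 : f.[1] != 0).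

Lemma Jm_fixed_vec_eq0 w : fixed_vec (Jm f m) w -> forall i, (i < d * m)%N -> w i = 0.
Proof.
move=> fixw.
have block_eq0 q : (q < m)%N ->
    (forall r, (q.+1 < m)%N -> (r < d)%N -> w (q.+1 * d + r)%N = 0) ->
    forall r, (r < d)%N -> w (q * d + r)%N = 0.
  move=> qm next_eq0; apply: compJ_fixed_eq0 fmon f1 _ => r rd.
  have qdr_lt : (q * d + r < d * m)%N by move: (size f).-1 rd => d' rd'; nia.
  have := fixw _ qdr_lt; rewrite Jm_row_sum //.
  rewrite divnMDl // modnMDl (divn_small rd) (modn_small rd) addn0.
  case: ifP => [q1m|_]; last by rewrite addr0.
  by rewrite addnAC -mulSnr next_eq0 // addr0.
have all_eq0 t q : (q + t.+1 = m)%N -> forall r, (r < d)%N -> w (q * d + r)%N = 0.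
  elim: t q => [|t IH] q qtm; apply: block_eq0; try lia.
  by move=> r r_lt; apply: IH; lia.
move=> i im; have qm : (i %/ d < m)%N by rewrite ltn_divLR // mulnC.
by rewrite (divn_eq i d) (all_eq0 (m - (i %/ d).+1)%N) ?ltn_mod //; lia.
Qed.
End JordanBlock.

Lemma inPhi_horner1_neq0 f : inPhi f -> f != tm1 -> f.[1] != 0.
Proof.
move=> [fmon [[_ firr] _]] ftm; apply: contra ftm => /eqP f1_eq0.
have /firr : 'X - 1%:P %| f by rewrite dvdp_XsubCl /root f1_eq0.
rewrite size_XsubC eqp_monic ?monicXsubC // => /(_ isT) /eqP <-.
by rewrite /tm1 polyC1.
Qed.

Lemma fixed_orthogonal_Jm f m :
  inPhi f -> f != tm1 -> fixed_orthogonal (bdiag_mx (Jm f m).1 [:: Jm f m]).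
Proof.
move=> Phi_f ftm; have [fmon [[size_f_gt1 _] _]] := Phi_f.
apply: fixed_orthogonal_bdiag1 => w u fixw _ a am.
rewrite (Jm_fixed_vec_eq0 _ fmon (inPhi_horner1_neq0 Phi_f ftm) fixw am) ?mulr0 //.
by rewrite -ltnS prednK // ltnW.
Qed.

Lemma Jmat_bdiag m (lam : PPhi F) : Jmat m lam = bdiag_mx m (Jblocks lam).
Proof. by []. Qed.

Lemma castmx_Jmat m m' (e : m = m') (lam : PPhi F) : castmx (e, e) (Jmat m lam) = Jmat m' lam.
Proof. by case: m' / e. Qed.

Lemma centralizerGL_castmx m m' (e : m = m') (J X : 'M[F]_m) :
  (castmx (e, e) X \in centralizerGL (castmx (e, e) J)) = (X \in centralizerGL J).
Proof. by case: m' / e. Qed.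

Lemma mem_PPhi_at (mu : PPhi F) f m :
  m \in PPhi_at mu f -> exists2 p, p \in mu & m \in p.2.
Proof.
elim: mu => [|[g l] mu IH] //; rewrite /PPhi_at /=.
case: eqP => _ /=; first by exists (g, l); rewrite ?mem_head.
by case/IH => p pmu mp; exists p; rewrite // inE pmu orbT.
Qed.

Lemma sumn_PPhi_at (mu : PPhi F) f : uniq (unzip1 mu) ->
  sumn (PPhi_at mu f) = (\sum_(p <- mu | p.1 == f) sumn p.2)%N.
Proof.
elim: mu => [|[g l] mu IH] /=; first by rewrite big_nil.
case/andP=> g_notin uniq_mu; rewrite big_cons /PPhi_at /=.
case: (eqVneq g f) => [gf|_] /=; last exact: IH.
rewrite big1_seq ?addn0 // => p /andP[/eqP p1f pmu].
by rewrite gf -p1f (map_f fst pmu) in g_notin.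
Qed.

Definition elementary_divisors (mu : PPhi F) : seq ({poly F} * nat) :=
  [seq (p.1, m) | p <- [seq p <- mu | p.1 != tm1], m <- p.2]
  ++ [seq (tm1, m.+1) | m <- PPhi_e mu].

Lemma Jblocks_PPhi_up t (mu : PPhi F) :
  Jblocks (PPhi_up t mu) =
  [seq Jm x.1 x.2 | x <- elementary_divisors mu]
  ++ nseq (t - size (PPhi_e mu) - PPhi_norm mu) (Jm tm1 1).
Proof.
rewrite /Jblocks /PPhi_up /= eqxx /= filter_id /PPhi_e /PPhi_at /= eqxx /=.
by rewrite /elementary_divisors !map_cat map_allpairs -!map_comp catA map_nseq.
Qed.

Lemma size_elementary_blocks (mu : PPhi F) : uniq (unzip1 mu) ->
  sumn (map fst [seq Jm x.1 x.2 | x <- elementary_divisors mu])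
  = (PPhi_norm mu + size (PPhi_e mu))%N.
Proof.
move=> uniq_mu; rewrite sumnE !big_map big_cat big_allpairs_dep big_filter /= !big_map /=.
have tm1_part : (\sum_(p <- mu | p.1 == tm1) (size p.1).-1 * sumn p.2 = sumn (PPhi_e mu))%N.
  by rewrite sumn_PPhi_at //; apply: eq_bigr => p /eqP->; rewrite size_tm1 mul1n.
have succ_part : (\sum_(m <- PPhi_e mu) (size tm1).-1 * m.+1 = sumn (PPhi_e mu) + size (PPhi_e mu))%N.
  by rewrite size_tm1; elim: (PPhi_e mu) => [|a e IH]; rewrite ?big_nil ?big_cons //= IH; lia.
under eq_bigr do rewrite -big_distrr -sumnE.
by rewrite /PPhi_norm [in RHS](bigID (fun p => p.1 == tm1)) /= tm1_part succ_part; lia.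
Qed.

Lemma elementary_divisorsP (mu : PPhi F) x : PPhi_valid mu ->
  x \in elementary_divisors mu ->
  (inPhi x.1 /\ x.1 != tm1) \/ (x.1 = tm1 /\ (1 < x.2)%N).
Proof.
move=> [_ valid]; rewrite mem_cat => /orP[/allpairsPdep[p [m [+ _ ->]]]|/mapP[m me ->]].
  by rewrite mem_filter => /andP[ptm /valid[Phi_p _]]; left.
right; split=> //; have [p pmu mp] := mem_PPhi_at me.
by have [_ /andP[_ /allP/(_ m mp)]] := valid p pmu.
Qed.

Section UpMatrices.
Variable mu : PPhi F.
Local Notation k := (PPhi_norm mu + size (PPhi_e mu))%N.

Lemma fixed_orthogonal_Jmat_up : PPhi_valid mu -> fixed_orthogonal (Jmat k (PPhi_up k mu)).
Proof.
move=> valid_mu; rewrite Jmat_bdiag Jblocks_PPhi_up (_ : k - _ - _ = 0)%N ?cats0; last by lia.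
rewrite -(size_elementary_blocks valid_mu.1).
apply: fixed_orthogonal_bdiag => x /(elementary_divisorsP valid_mu).
by case=> [[Phi_x xtm]|[-> x_gt1]]; [apply: fixed_orthogonal_Jm | apply: fixed_orthogonal_Jm_tm1].
Qed.

Lemma Jmat_up_block n : uniq (unzip1 mu) ->
  Jmat (k + (n - k)) (PPhi_up n mu) = block_mx (Jmat k (PPhi_up k mu)) 0 0 1%:M.
Proof.
move=> uniq_mu; rewrite !Jmat_bdiag !Jblocks_PPhi_up (_ : k - _ - _ = 0)%N ?cats0; last by lia.
rewrite (_ : n - _ - _ = n - k)%N; last by lia.
by rewrite bdiag_mx_cat ?size_elementary_blocks // bdiag_mx_ones.
Qed.
End UpMatrices.
End Blocks.

Unset Implicit Arguments.

Theorem proposition2p5 (F : finFieldType) (n : nat) (mu : PPhi F)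
  (hmu : PPhi_valid mu)
  (hk : (PPhi_norm mu + size (PPhi_e mu) <= n)%N) :
  let k := (PPhi_norm mu + size (PPhi_e mu))%N in
  let Jn := Jmat n (PPhi_up n mu) in
  let Jk := Jmat k (PPhi_up k mu) in
  forall X : 'M[F]_n,
    let Y : 'M[F]_(k + (n - k)) := castmx (esym (subnKC hk), esym (subnKC hk)) X in
    X \in centralizerGL Jn <->
      [/\ ulsubmx Y \in centralizerGL Jk,
          drsubmx Y \in unitmx,
          Jk *m ursubmx Y = ursubmx Y &
          dlsubmx Y *m Jk = dlsubmx Y].
Proof.
move=> k Jn Jk X Y.
rewrite -(centralizerGL_castmx (esym (subnKC hk))) -/Y castmx_Jmat Jmat_up_block; last by case: hmu.
rewrite -{1}[Y]submxK inE centralizer_block_diag1; last exact: fixed_orthogonal_Jmat_up.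
by rewrite inE; split=> [/and4P[? ? /eqP? /eqP?] | [? ? /eqP? /eqP?]]; [split | apply/and4P].
Qed.
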